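(* The average variance of the entries of $\mathcal Q(\tilde X)$, namely $\frac1{N^2}\sum_{k_1,k_2}\operatorname{var}\big(\mathcal Q(\tilde X)[k_1,k_2]\big)$, is $O(M^2/N^2)$.
   Context: $M,N$ positive integers with $N>2M$; $g$ is a real $M\times M$ image with values in $[0,255]$ zero-padded to $N\times N$, $\tilde g=\tilde g_R+j\tilde g_I$ its $N\times N$ 2D-DFT $\mathfrak F(g)$; $\tilde X=\tilde X_R+j\tilde X_I$ with $\tilde X_R=\mathbb 1(\tilde g_R+W_R+d_R>0)-\tfrac12$, $\tilde X_I=\mathbb 1(\tilde g_I+W_I+d_I>0)-\tfrac12$ entrywise, where $W_R,W_I$ have independent entries of zero-mean noise of known distribution symmetric about $0$ and $d_R,d_I$ are independent AWGN dither. $\mathcal Q(\tilde h)=\mathfrak F(\textsc{Clip}(\textsc{Proj}(\mathfrak F^{-1}(\tilde h))))$, where $\textsc{Proj}$ zeroes spatial-domain pixels outside the $M^2$-pixel image block and $\textsc{Clip}$ clips pixel values to $[0,255]$. *)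

From HB Require Import structures.
From mathcomp Require Import all_boot all_order all_algebra.
From mathcomp Require Import complex.
From mathcomp Require Import all_classical all_reals all_analysis.

Set Implicit Arguments.
Unset Strict Implicit.
Unset Printing Implicit Defensive.

Import Order.TTheory GRing.Theory Num.Theory.
Local Open Scope classical_set_scope.
Local Open Scope ring_scope.

Definition expi (R : realType) (t : R) : R[i] := (cos t +i* sin t)%C.

Definition dft2 (R : realType) (N : nat) (h : 'M[R[i]]_N) : 'M[R[i]]_N :=
  \matrix_(k1 < N, k2 < N) \sum_(n1 < N) \sum_(n2 < N)
     (h n1 n2 * expi (- (2 * pi * ((k1 * n1 + k2 * n2)%N)%:R / N%:R))).

Definition idft2 (R : realType) (N : nat) (h : 'M[R[i]]_N) : 'M[R[i]]_N :=
  \matrix_(n1 < N, n2 < N) ((((N ^ 2)%:R)^-1 : R)%:C%C *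
     \sum_(k1 < N) \sum_(k2 < N)
       (h k1 k2 * expi (2 * pi * ((k1 * n1 + k2 * n2)%N)%:R / N%:R))).

(* Proj: zero every pixel outside the M x M image block (top-left corner,
   where the M x M image sits after zero padding). *)
Definition proj_blk (R : realType) (N M : nat) (h : 'M[R[i]]_N) : 'M[R[i]]_N :=
  \matrix_(i < N, j < N) if ((i < M) && (j < M))%N then h i j else 0.

Definition clip (R : realType) (x : R) : R := Num.min 255 (Num.max 0 x).

Definition clip_img (R : realType) (N : nat) (h : 'M[R[i]]_N) : 'M[R[i]]_N :=
  \matrix_(i < N, j < N) (clip (complex.Re (h i j)))%:C%C.

Definition Qop (R : realType) (N M : nat) (h : 'M[R[i]]_N) : 'M[R[i]]_N :=
  dft2 (clip_img (proj_blk M (idft2 h))).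

Definition sgnbit (R : realType) (x : R) : R := (if 0 < x then 1 else 0) - 2^-1.

Definition Xtilde (R : realType) (N : nat) (T : Type) (gt : 'M[R[i]]_N)
  (WR WI dR dI : 'I_N -> 'I_N -> T -> R) (w : T) : 'M[R[i]]_N :=
  \matrix_(k1 < N, k2 < N)
    (sgnbit (complex.Re (gt k1 k2) + WR k1 k2 w + dR k1 k2 w)
     +i* sgnbit (complex.Im (gt k1 k2) + WI k1 k2 w + dI k1 k2 w))%C.

Definition img_dft (R : realType) (N : nat) (g : 'M[R]_N) : 'M[R[i]]_N :=
  dft2 (map_mx (fun x => x%:C%C) g).

(* variance of a complex random variable: E|Z - EZ|^2 = var(Re Z) + var(Im Z) *)
Definition cvariance d (T : measurableType d) (R : realType) (P : probability T R)
  (Z : T -> R[i]) : \bar R :=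
  ('V_P[fun w => complex.Re (Z w)] + 'V_P[fun w => complex.Im (Z w)])%E.

Definition mutually_independent d (T : measurableType d) (R : realType)
  (P : probability T R) (I : finType) (X : I -> T -> R) : Prop :=
  forall B : I -> set R, (forall i, measurable (B i)) ->
    P (\bigcap_(i in [set: I]) (X i @^-1` B i)) =
    (\prod_(i : I) P (X i @^-1` B i))%E.

Definition noise_family (R : realType) (N : nat) (T : Type)
  (WR WI dR dI : 'I_N -> 'I_N -> T -> R) (t : 'I_4 * 'I_N * 'I_N) : T -> R :=
  match val t.1.1 with
  | 0 => WR t.1.2 t.2
  | 1 => WI t.1.2 t.2
  | 2 => dR t.1.2 t.2
  | _ => dI t.1.2 t.2
  end.

Definition symmetric_law (R : realType) (mu : probability R R) : Prop :=
  forall A : set R, measurable A -> mu [set - x | x in A] = mu A.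

From HB Require Import structures.
From mathcomp Require Import all_boot all_order all_algebra.
From mathcomp Require Import complex.
From mathcomp Require Import all_classical all_reals all_analysis.
From mathcomp Require Import measurable_realfun ring lra zify.
Import Order.TTheory GRing.Theory Num.Theory.
Local Open Scope classical_set_scope.
Local Open Scope ring_scope.

(* Each part of an entry of X~ is sgnbit (c + W + d), a +-1/2-valued function
   of a pair of noises; distinct parts use disjoint pairs of mutually
   independent noises, so they are uncorrelated and have variance at most 1/4.
   The real part of a pixel of F^{-1}(X~) combines these parts with
   coefficients cos/N^2 and -sin/N^2 whose squares sum to 1/N^2, so its
   variance is at most 1/(4N^2).  Clipping is 1-Lipschitz, hence does not
   increase variance, and Proj keeps only M^2 pixels.  By orthogonality of
   the DFT characters, the variances of the real and imaginary parts of the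
   N^2 DFT coefficients of a random image add up to N^2 times its total pixel
   variance, so the average variance of Q(X~) is at most M^2/(4N^2). *)

Section bounded_random_variable.
Context {d} {T : measurableType d} {R : realType} {P : probability T R}.

Definition bounded_rv (f : T -> R) :=
  measurable_fun setT f /\ exists c : R, forall w, `|f w| <= c.

Lemma bounded_rv_Lfun1 {f} : bounded_rv f -> f \in Lfun P 1.
Proof.
move=> [mf [c fc]]; apply/Lfun1_integrable.
apply: measurable_bounded_integrable => //.
  by rewrite (le_lt_trans (probability_le1 P measurableT)) ?ltry.
exists c; split; first exact: num_real.
by move=> x cx y _ /=; rewrite (le_trans (fc y)) ?ltW.
Qed.

Lemma bounded_rv_cst c : bounded_rv (fun _ => c).
Proof. by split=> //; exists `|c|. Qed.

Lemma bounded_rvD {f g} :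
  bounded_rv f -> bounded_rv g -> bounded_rv (fun w => f w + g w).
Proof.
move=> [mf [c fc]] [mg [c' gc']]; split; first exact: measurable_funD.
by exists (c + c') => w; rewrite (le_trans (ler_normD _ _)) ?lerD.
Qed.

Lemma bounded_rvM {f g} :
  bounded_rv f -> bounded_rv g -> bounded_rv (fun w => f w * g w).
Proof.
move=> [mf [c fc]] [mg [c' gc']]; split; first exact: measurable_funM.
by exists (c * c') => w; rewrite normrM ler_pM.
Qed.

Lemma bounded_rvZ k {f} : bounded_rv f -> bounded_rv (fun w => k * f w).
Proof. exact/bounded_rvM/bounded_rv_cst. Qed.

Lemma bounded_rv_sum (I : Type) (s : seq I) (F : I -> T -> R) :
  (forall i, bounded_rv (F i)) -> bounded_rv (fun w => \sum_(i <- s) F i w).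
Proof.
move=> bF; elim: s => [|i s IHs].
  by under eq_fun do rewrite big_nil; exact: bounded_rv_cst.
by under eq_fun do rewrite big_cons; exact: bounded_rvD.
Qed.

Lemma bounded_rv_lin (J : finType) (a : J -> R) (F : J -> T -> R) :
  (forall j, bounded_rv (F j)) -> bounded_rv (fun w => \sum_j a j * F j w).
Proof. by move=> bF; apply: bounded_rv_sum => j; exact: bounded_rvZ. Qed.

Lemma bounded_rv_sqrB c {f} :
  bounded_rv f -> bounded_rv (fun w => (f w - c) ^+ 2).
Proof.
move=> bf; under eq_fun do rewrite expr2.
by apply: bounded_rvM; apply: bounded_rvD => //; exact: (bounded_rv_cst (- _)).
Qed.

Lemma bounded_rv_indic (A : set T) : measurable A -> bounded_rv (\1_A).
Proof.
move=> mA; split; first exact: measurable_indic.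
by exists 1 => w; rewrite /indic; case: (_ \in _); rewrite ?normr1 ?normr0.
Qed.

Definition mean (f : T -> R) : R := fine ('E_P[f])%E.

Definition var (f : T -> R) : R := mean (fun w => (f w - mean f) ^+ 2).

Definition cov (f g : T -> R) : R :=
  mean (fun w => f w * g w) - mean f * mean g.

Lemma expectation_mean f : bounded_rv f -> ('E_P[f])%E = (mean f)%:E.
Proof.
by move=> /bounded_rv_Lfun1 f1; rewrite fineK ?expectation_fin_num.
Qed.

Lemma mean_cst c : mean (fun _ => c) = c.
Proof. by rewrite /mean -[fun _ => c]/(cst c) expectation_cst. Qed.

Lemma meanD f g : bounded_rv f -> bounded_rv g ->
  mean (fun w => f w + g w) = mean f + mean g.
Proof.
move=> bf bg; rewrite /mean -[fun w => _]/(f \+ g).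
by rewrite expectationD ?bounded_rv_Lfun1 // (expectation_mean f bf) (expectation_mean g bg).
Qed.

Lemma meanZ k f : bounded_rv f -> mean (fun w => k * f w) = k * mean f.
Proof.
move=> bf; rewrite /mean (_ : (fun w => _) = k \o* f); last first.
  by apply/funext => w /=; rewrite mulrC.
by rewrite expectationZl ?bounded_rv_Lfun1 // (expectation_mean f bf).
Qed.

Lemma mean_sum (I : Type) (s : seq I) (F : I -> T -> R) :
  (forall i, bounded_rv (F i)) ->
  mean (fun w => \sum_(i <- s) F i w) = \sum_(i <- s) mean (F i).
Proof.
move=> bF; elim: s => [|i s IHs].
  by under eq_fun do rewrite big_nil; rewrite big_nil mean_cst.
under eq_fun do rewrite big_cons.
by rewrite big_cons meanD ?IHs //; exact: bounded_rv_sum.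
Qed.

Lemma mean_indic (A : set T) : measurable A -> mean (\1_A) = fine (P A).
Proof. by move=> mA; rewrite /mean expectation_indic. Qed.

Lemma mean_le f g : bounded_rv f -> bounded_rv g ->
  (forall w, f w <= g w) -> mean f <= mean g.
Proof.
move=> bf bg fg; rewrite -subr_ge0 -mulN1r -meanZ // -meanD //;
  last exact: bounded_rvZ.
have : (0 <= 'E_P[fun w => (g w + -1 * f w)%R])%E.
  by apply: expectation_ge0 => w; rewrite mulN1r subr_ge0.
by rewrite expectation_mean ?lee_fin //; apply: bounded_rvD => //; exact: bounded_rvZ.
Qed.

Lemma variance_var f : bounded_rv f -> ('V_P[f])%E = (var f)%:E.
Proof.
move=> bf; rewrite /variance unlock -/(expectation P _) expectation_mean.
  by rewrite /var; congr (mean _)%:E; apply/funext => w; rewrite /= expr2.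
by apply: bounded_rvM; apply: bounded_rvD => //; exact: (bounded_rv_cst (- _)).
Qed.

Lemma mean_sqrB {f} c : bounded_rv f ->
  mean (fun w => (f w - c) ^+ 2) = var f + (mean f - c) ^+ 2.
Proof.
move=> bf; set e := mean f - c.
have -> : (fun w => (f w - c) ^+ 2) =
    (fun w => (f w - mean f) ^+ 2 + (2 * e * f w + (e ^+ 2 - 2 * e * mean f))).
  by apply/funext => w; rewrite /e; ring.
have b1 := bounded_rv_sqrB (mean f) bf.
have b2 := bounded_rvZ (2 * e) bf.
have b3 := bounded_rv_cst (e ^+ 2 - 2 * e * mean f).
have b23 := bounded_rvD b2 b3.
by rewrite meanD // meanD // meanZ // mean_cst /var /e; ring.
Qed.

Lemma var_le_mean_sqrB {f} c : bounded_rv f ->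
  var f <= mean (fun w => (f w - c) ^+ 2).
Proof. by move=> bf; rewrite mean_sqrB // lerDl sqr_ge0. Qed.

Lemma var_cov f : bounded_rv f -> var f = cov f f.
Proof.
move=> bf; have := mean_sqrB 0 bf; under eq_fun do rewrite subr0 expr2.
by rewrite /cov => ->; rewrite subr0; ring.
Qed.

Lemma covC f g : cov f g = cov g f.
Proof.
by rewrite /cov mulrC; congr (mean _ - _); apply/funext => w; rewrite mulrC.
Qed.

Lemma covB f g a b : bounded_rv f -> bounded_rv g ->
  cov (fun w => f w - a) (fun w => g w - b) = cov f g.
Proof.
move=> bf bg; rewrite /cov.
have -> : (fun w => (f w - a) * (g w - b)) =
    (fun w => f w * g w + (- b * f w + (- a * g w + a * b))).
  by apply/funext => w; ring.
have b1 := bounded_rvM bf bg.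
have b2 := bounded_rvZ (- b) bf.
have b3 := bounded_rvZ (- a) bg.
have b4 := bounded_rv_cst (a * b).
have b34 := bounded_rvD b3 b4.
have b234 := bounded_rvD b2 b34.
have ba := bounded_rv_cst (- a).
have bb := bounded_rv_cst (- b).
by rewrite !meanD // (meanZ (- b)) // (meanZ (- a)) // !mean_cst; ring.
Qed.

Lemma cov_suml (J : finType) (a : J -> R) (F : J -> T -> R) g :
  (forall j, bounded_rv (F j)) -> bounded_rv g ->
  cov (fun w => \sum_j a j * F j w) g = \sum_j a j * cov (F j) g.
Proof.
move=> bF bg; rewrite /cov.
under eq_fun do rewrite mulr_suml; under eq_fun do under eq_bigr do rewrite -mulrA.
have bFg j : bounded_rv (fun w => a j * (F j w * g w)).
  exact/bounded_rvZ/bounded_rvM.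
have baF j : bounded_rv (fun w => a j * F j w) by exact: bounded_rvZ.
rewrite !mean_sum // mulr_suml -sumrB; apply: eq_bigr => j _.
by rewrite !meanZ ?mulrBr ?mulrA //; exact: bounded_rvM.
Qed.

Lemma var_lin (J : finType) (a : J -> R) (F : J -> T -> R) :
  (forall j, bounded_rv (F j)) ->
  var (fun w => \sum_j a j * F j w) =
  \sum_i \sum_j a i * a j * cov (F i) (F j).
Proof.
move=> bF; rewrite var_cov ?cov_suml //; try exact: bounded_rv_lin.
apply: eq_bigr => i _; rewrite covC cov_suml // mulr_sumr.
by apply: eq_bigr => j _; rewrite covC mulrA.
Qed.

Lemma var_lin_uncorrelated_le (J : finType) (a : J -> R) (F : J -> T -> R) v :
  (forall j, bounded_rv (F j)) ->
  (forall i j, i != j -> cov (F i) (F j) = 0) ->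
  (forall j, var (F j) <= v) ->
  var (fun w => \sum_j a j * F j w) <= v * \sum_j a j ^+ 2.
Proof.
move=> bF F0 Fv; rewrite var_lin // mulr_sumr; apply: ler_sum => i _.
rewrite (bigD1 i) //= big1 ?addr0 => [|j ji]; last by rewrite F0 ?mulr0 // eq_sym.
by rewrite -var_cov // -expr2 mulrC ler_wpM2r ?sqr_ge0.
Qed.

End bounded_random_variable.
Arguments mean {d T R} P f.
Arguments var {d T R} P f.
Arguments cov {d T R} P f g.

Section clip.
Context {R : realType}.

Lemma clip_sqrB_le (x y : R) : (clip x - clip y) ^+ 2 <= (x - y) ^+ 2.
Proof.
rewrite /clip /Num.min /Num.max.
case: (ltP 0 x) => ?; case: (ltP 0 y) => ?;
  case: (ltP 255 x) => ?; case: (ltP 255 y) => ?; case: (ltP (255:R) 0) => ?;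
  have := sqr_ge0 (x - y); rewrite ?expr2 => ?; nra.
Qed.

Lemma normr_clip_le (x : R) : `|clip x| <= 255.
Proof.
rewrite /clip /Num.min /Num.max.
by case: (ltP 0 x) => ?; case: (ltP 255 x) => ?; case: (ltP (255:R) 0) => ?;
  rewrite ?ger0_norm; lra.
Qed.

Lemma clip0 : clip (0 : R) = 0.
Proof. by rewrite /clip /Num.min /Num.max ltxx; case: (ltP (255:R) 0) => ?; lra. Qed.

End clip.

Section clipped_random_variable.
Context {d} {T : measurableType d} {R : realType} {P : probability T R}.

Lemma bounded_rv_clip {u : T -> R} :
  bounded_rv u -> bounded_rv (fun w => clip (u w)).
Proof.
move=> [mu _]; split; last by exists 255 => w; exact: normr_clip_le.
apply: (measurable_minr (f := fun _ => 255)); first exact: measurable_cst.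
by apply: (measurable_maxr (f := fun _ => 0)) => //; exact: measurable_cst.
Qed.

Lemma var_clip_le {u : T -> R} :
  bounded_rv u -> var P (fun w => clip (u w)) <= var P u.
Proof.
move=> bu; have bcu := bounded_rv_clip bu.
apply: le_trans (var_le_mean_sqrB (clip (mean P u)) bcu) _.
apply: mean_le; [exact: bounded_rv_sqrB | exact: bounded_rv_sqrB |].
by move=> w; exact: clip_sqrB_le.
Qed.

End clipped_random_variable.

Lemma measure_rect_unique {d1 d2} {T1 : measurableType d1}
    {T2 : measurableType d2} {R : realType}
    (m1 m2 : {measure set (T1 * T2)%type -> \bar R}) :
  (m1 setT < +oo)%E ->
  (forall A B, measurable A -> measurable B -> m1 (A `*` B) = m2 (A `*` B)) ->
  forall S, measurable S -> m1 S = m2 S.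
Proof.
move=> m1oo m12 S mS.
apply: (measure_unique [set A `*` B | A in measurable & B in measurable]
  (fun _ => setT)) => //.
- exact: measurable_prod_measurableType.
- move=> _ _ [A mA [B mB <-]] [A' mA' [B' mB' <-]].
  exists (A `&` A'); first exact: measurableI.
  by exists (B `&` B'); [exact: measurableI | rewrite setXI].
- by move=> _; exists setT => //; exists setT => //; rewrite setXTT.
- by rewrite bigcup_const.
- by move=> _ [A mA [B mB <-]]; exact: m12.
Qed.

(* The library's measure instance on [pushforward m f] takes the
   measurability of [f] as an argument, so it cannot be inferred. *)
Definition pushforward_measure d1 d2 (T1 : measurableType d1)
    (T2 : measurableType d2) (R : realFieldType)
    (m : {measure set T1 -> \bar R}) (f : T1 -> T2)
    (mf : measurable_fun setT f) : {measure set T2 -> \bar R} :=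
  measure_function_pushforward__canonical__measure_function_Measure m mf.
Arguments pushforward_measure {d1 d2 T1 T2 R} m {f} mf.

Section independent_pairs.
Context {d} {T : measurableType d} {R : realType} (P : probability T R).

Let probability_fineK (A : set T) : measurable A -> P A = (fine (P A))%:E.
Proof. by move=> mA; rewrite fineK // fin_num_measure. Qed.

Lemma independent_rect_ext {d1 d2} {T1 : measurableType d1}
    {T2 : measurableType d2} (U : T -> (T1 * T2)%type) (E : set T) :
  measurable_fun setT U -> measurable E ->
  (forall A B, measurable A -> measurable B ->
    P (U @^-1` (A `*` B) `&` E) = (P (U @^-1` (A `*` B)) * P E)%E) ->
  forall S, measurable S -> P (U @^-1` S `&` E) = (P (U @^-1` S) * P E)%E.
Proof.
move=> mU mE UE S mS.
have PE0 : (0 <= fine (P E))%R by apply: fine_ge0.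
have := measure_rect_unique (pushforward_measure (mrestr P mE) mU)
  (mscale (NngNum PE0) (pushforward_measure P mU)).
rewrite /= /mscale /pushforward /mrestr /= -probability_fineK // => -> //.
- by rewrite muleC.
- by rewrite preimage_setT setTI (le_lt_trans (probability_le1 P mE)) ?ltry.
- by move=> A B mA mB; rewrite muleC; exact: UE.
Qed.

Variables (X1 X2 Y1 Y2 : T -> R).
Hypotheses (mX1 : measurable_fun setT X1) (mX2 : measurable_fun setT X2).
Hypotheses (mY1 : measurable_fun setT Y1) (mY2 : measurable_fun setT Y2).
Hypothesis XY_indep : forall A1 A2 B1 B2, measurable A1 -> measurable A2 ->
  measurable B1 -> measurable B2 ->
  P (X1 @^-1` A1 `&` X2 @^-1` A2 `&` (Y1 @^-1` B1 `&` Y2 @^-1` B2)) =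
  (P (X1 @^-1` A1 `&` X2 @^-1` A2) * P (Y1 @^-1` B1 `&` Y2 @^-1` B2))%E.

Let X w := (X1 w, X2 w).
Let Y w := (Y1 w, Y2 w).
Let mX : measurable_fun setT X := measurable_fun_pair mX1 mX2.
Let mY : measurable_fun setT Y := measurable_fun_pair mY1 mY2.

Let measurable_preimage {Z : T -> (R * R)%type} {S} :
  measurable_fun setT Z -> measurable S -> measurable (Z @^-1` S).
Proof. by move=> mZ mS; rewrite -(setTI (Z @^-1` S)); exact: mZ. Qed.

Lemma independent_pairs S1 S2 : measurable S1 -> measurable S2 ->
  P (X @^-1` S1 `&` Y @^-1` S2) = (P (X @^-1` S1) * P (Y @^-1` S2))%E.
Proof.
move=> mS1 mS2; rewrite setIC independent_rect_ext //; first by rewrite muleC.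
  exact: measurable_preimage.
move=> B1 B2 mB1 mB2; rewrite setIC muleC independent_rect_ext //.
  by apply: measurable_preimage => //; exact: measurableX.
by move=> A1 A2 mA1 mA2; exact: XY_indep.
Qed.

Definition pos_halfplane (c : R) : set (R * R)%type := [set p | 0 < c + p.1 + p.2].

Lemma measurable_pos_halfplane c : measurable (pos_halfplane c).
Proof.
have mf : measurable_fun setT (fun p : (R * R)%type => c + p.1 + p.2).
  apply: measurable_funD; last exact: measurable_snd.
  by apply: measurable_funD; [exact: measurable_cst | exact: measurable_fst].
have := mf measurableT _ (measurable_itv `]0, +oo[).
by rewrite setTI; congr measurable; apply/seteqP; split => p /=;
  rewrite in_itv /= andbT.
Qed.

Lemma sgnbit_indic (Z1 Z2 : T -> R) c w :
  sgnbit (c + Z1 w + Z2 w) =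
  \1_((fun w => (Z1 w, Z2 w)) @^-1` pos_halfplane c) w - 2^-1.
Proof.
rewrite /sgnbit /indic; case: (boolP (0 < _)) => h; first by rewrite mem_set.
by rewrite memNset //= /pos_halfplane /=; apply/negP.
Qed.

Lemma bounded_rv_sgnbit (Z1 Z2 : T -> R) c :
  measurable_fun setT Z1 -> measurable_fun setT Z2 ->
  bounded_rv (fun w => sgnbit (c + Z1 w + Z2 w)).
Proof.
move=> mZ1 mZ2; under eq_fun do rewrite sgnbit_indic.
apply: bounded_rvD; last exact: bounded_rv_cst.
apply/bounded_rv_indic/measurable_preimage; last exact: measurable_pos_halfplane.
exact: measurable_fun_pair.
Qed.

Lemma cov_sgnbit_independent c c' :
  cov P (fun w => sgnbit (c + X1 w + X2 w))
        (fun w => sgnbit (c' + Y1 w + Y2 w)) = 0.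
Proof.
under eq_fun do rewrite sgnbit_indic.
under [G in cov _ _ G]eq_fun do rewrite sgnbit_indic.
have mXc := measurable_preimage mX (measurable_pos_halfplane c).
have mYc := measurable_preimage mY (measurable_pos_halfplane c').
rewrite -/X -/Y covB; [|exact: bounded_rv_indic..].
rewrite /cov (_ : (fun w => _ * _) = \1_(X @^-1` pos_halfplane c `&`
    Y @^-1` pos_halfplane c')); last by rewrite indicI.
rewrite !mean_indic //; last exact: measurableI.
rewrite independent_pairs; try exact: measurable_pos_halfplane.
by rewrite fineM ?fin_num_measure // subrr.
Qed.

End independent_pairs.

Section mutually_independent_family.
Context {d} {T : measurableType d} {R : realType} (P : probability T R).
Variables (I : finType) (F : I -> T -> R).
Hypothesis F_indep : mutually_independent P F.

Lemma mutually_independent_setI (B1 B2 : I -> set R) :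
  (forall i, measurable (B1 i)) -> (forall i, measurable (B2 i)) ->
  (forall i, B1 i = setT \/ B2 i = setT) ->
  P (\bigcap_(i in [set: I]) (F i @^-1` B1 i) `&`
     \bigcap_(i in [set: I]) (F i @^-1` B2 i)) =
  (P (\bigcap_(i in [set: I]) (F i @^-1` B1 i)) *
   P (\bigcap_(i in [set: I]) (F i @^-1` B2 i)))%E.
Proof.
move=> mB1 mB2 B12; rewrite -bigcapI.
rewrite (F_indep (fun i => B1 i `&` B2 i)) => [|i]; last exact: measurableI.
rewrite !F_indep // -big_split /=; apply: eq_bigr => i _.
by case: (B12 i) => ->; rewrite preimage_setT ?setTI ?setIT probability_setT
  ?mul1e ?mule1.
Qed.

Definition pair_sets (t t' : I) (A A' : set R) (i : I) : set R :=
  if i == t then A else if i == t' then A' else setT.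

Lemma bigcap_pair_sets {t t'} A A' : t != t' ->
  \bigcap_(i in [set: I]) (F i @^-1` pair_sets t t' A A' i) =
  F t @^-1` A `&` F t' @^-1` A'.
Proof.
move=> tt'; have t't : (t' == t) = false by rewrite eq_sym (negbTE tt').
apply/seteqP; split => w /=.
  by move=> Aw; split; [move: (Aw t Logic.I) | move: (Aw t' Logic.I)];
    rewrite /pair_sets ?t't eqxx.
by move=> [At At'] i _; rewrite /pair_sets; do 2?case: eqP => [->|_].
Qed.

Lemma mutually_independent_pairs t1 t2 s1 s2 :
  t1 != t2 -> s1 != s2 ->
  t1 != s1 -> t1 != s2 -> t2 != s1 -> t2 != s2 ->
  forall A1 A2 B1 B2, measurable A1 -> measurable A2 ->
    measurable B1 -> measurable B2 ->
  P (F t1 @^-1` A1 `&` F t2 @^-1` A2 `&` (F s1 @^-1` B1 `&` F s2 @^-1` B2)) =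
  (P (F t1 @^-1` A1 `&` F t2 @^-1` A2) * P (F s1 @^-1` B1 `&` F s2 @^-1` B2))%E.
Proof.
move=> t12 s12 ts11 ts12 ts21 ts22 A1 A2 B1 B2 mA1 mA2 mB1 mB2.
rewrite -(bigcap_pair_sets A1 A2 t12) -(bigcap_pair_sets B1 B2 s12).
apply: mutually_independent_setI => i; rewrite /pair_sets.
- by do 2?case: ifP.
- by do 2?case: ifP.
- have [->|_] := eqVneq i t1.
    by right; rewrite (negbTE ts11) (negbTE ts12).
  have [->|_] := eqVneq i t2; last by left.
  by right; rewrite (negbTE ts21) (negbTE ts22).
Qed.

End mutually_independent_family.

Section dft_orthogonality.
Context {R : realType}.

Definition dft_angle (N k1 k2 n1 n2 : nat) : R :=
  2 * pi * ((k1 * n1 + k2 * n2)%N)%:R / N%:R.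

Lemma sumr_cos_arith (N : nat) (a b : R) : sin (a / 2) != 0 ->
  \sum_(k < N) cos (a * k%:R + b) =
  (sin (a * N%:R + b - a / 2) - sin (b - a / 2)) / (2 * sin (a / 2)).
Proof.
move=> sa0; have s2a0 : 2 * sin (a / 2) != 0 by rewrite mulf_neq0 ?pnatr_eq0.
pose u k := sin (a * k%:R + b - a / 2).
have cos_telescope k : cos (a * k%:R + b) = (u k.+1 - u k) / (2 * sin (a / 2)).
  apply: (mulIf s2a0); rewrite divfK // /u.
  have -> : a * k.+1%:R + b - a / 2 = (a * k%:R + b) + a / 2.
    by rewrite -natr1; field.
  by rewrite sinD sinB; ring.
under eq_bigr do rewrite cos_telescope.
rewrite -mulr_suml -(big_mkord xpredT (fun k => u k.+1 - u k)) telescope_sumr //.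
by rewrite /u mulr0 add0r.
Qed.

Lemma sinDn2pi (x : R) (n : nat) : sin (x + n%:R * (2 * pi)) = sin x.
Proof.
have -> : n%:R * (2 * pi) = pi *+ 2 *+ n :> R by rewrite !mulr_natl.
exact/periodicn/sinD2pi.
Qed.

Lemma sinBn2pi (x : R) (n : nat) : sin (x - n%:R * (2 * pi)) = sin x.
Proof. by rewrite -(sinDn2pi (x - _) n) subrK. Qed.

Lemma sin_dft_half_neq0 (N m m' : nat) : (m < N)%N -> (m' < N)%N -> m != m' ->
  sin ((m%:R - m'%:R) * (2 * pi) / N%:R / 2) != 0 :> R.
Proof.
wlog m'm : m m' / (m' < m)%N => [hwlog mN m'N mm'|mN _ _].
  case: (ltngtP m m') => [lt_mm'|lt_m'm|/eqP]; last by rewrite (negbTE mm').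
    have -> : (m%:R - m'%:R) * (2 * pi) / N%:R / 2 =
      - ((m'%:R - m%:R) * (2 * pi) / N%:R / 2) :> R by ring.
    by rewrite sinN oppr_eq0 hwlog // eq_sym.
  exact: hwlog.
have N0 : 0 < N%:R :> R by rewrite ltr0n (leq_ltn_trans _ mN).
have -> : (m%:R - m'%:R) * (2 * pi) / N%:R / 2 = (m%:R - m'%:R) / N%:R * pi :> R.
  by field; rewrite gt_eqF.
apply/lt0r_neq0/sin_gt0_pi; have dm0 : 0 < m%:R - m'%:R :> R.
  by rewrite subr_gt0 ltr_nat.
rewrite mulr_gt0 ?divr_gt0 ?pi_gt0 //= gtr_pMl ?pi_gt0 // ltr_pdivrMr // mul1r.
by rewrite (le_lt_trans _ (_ : m%:R < N%:R)) ?ltr_nat // lerBlDr lerDl.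
Qed.

Lemma sumr_cos_dft (N m m' : nat) (b : R) : (m < N)%N -> (m' < N)%N ->
  \sum_(k < N) cos ((m%:R - m'%:R) * (2 * pi) / N%:R * k%:R + b) =
  if m == m' then N%:R * cos b else 0.
Proof.
move=> mN m'N; have [->|mm'] := eqVneq m m'.
  under eq_bigr do rewrite subrr !mul0r add0r.
  by rewrite sumr_const card_ord mulr_natl.
rewrite sumr_cos_arith ?sin_dft_half_neq0 //.
have -> : (m%:R - m'%:R) * (2 * pi) / N%:R * N%:R + b -
    (m%:R - m'%:R) * (2 * pi) / N%:R / 2 =
  (b - (m%:R - m'%:R) * (2 * pi) / N%:R / 2 - m'%:R * (2 * pi)) +
    m%:R * (2 * pi) :> R.
  by field; rewrite pnatr_eq0 -lt0n (leq_ltn_trans _ mN).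
by rewrite sinDn2pi sinBn2pi subrr mul0r.
Qed.

Lemma dft_orthogonality (N n1 n2 n1' n2' : nat) : (n1 < N)%N -> (n2 < N)%N ->
  (n1' < N)%N -> (n2' < N)%N ->
  \sum_(k1 < N) \sum_(k2 < N)
    cos (dft_angle N k1 k2 n1 n2 - dft_angle N k1 k2 n1' n2') =
  if (n1 == n1') && (n2 == n2') then (N ^ 2)%:R else 0.
Proof.
move=> n1N n2N n1'N n2'N.
have angleB k1 k2 : dft_angle N k1 k2 n1 n2 - dft_angle N k1 k2 n1' n2' =
    (n2%:R - n2'%:R) * (2 * pi) / N%:R * k2%:R +
    (n1%:R - n1'%:R) * (2 * pi) / N%:R * k1%:R.
  by rewrite /dft_angle !natrD !natrM; ring.
under eq_bigr do under eq_bigr do rewrite angleB.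
under eq_bigr do rewrite sumr_cos_dft //.
have [_|n22'] := eqVneq n2 n2'; last by rewrite andbF big1.
under eq_bigr => k _ do rewrite -[_ * k%:R]addr0.
rewrite andbT -mulr_sumr sumr_cos_dft //.
by case: eqP => _; rewrite ?cos0 ?mulr0 ?mulr1 // -natrM mulnn.
Qed.

End dft_orthogonality.

Section dft_variance.
Context {d} {T : measurableType d} {R : realType} (P : probability T R).

Lemma dft_var_parseval (N : nat) (p : 'I_N * 'I_N -> T -> R) :
  (forall n, bounded_rv (p n)) ->
  \sum_(k : 'I_N * 'I_N)
    (var P (fun w => \sum_(n : 'I_N * 'I_N)
                       cos (- dft_angle N k.1 k.2 n.1 n.2) * p n w) +
     var P (fun w => \sum_(n : 'I_N * 'I_N)
                       sin (- dft_angle N k.1 k.2 n.1 n.2) * p n w)) =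
  (N ^ 2)%:R * \sum_n var P (p n).
Proof.
move=> bp; pose cs (k n : 'I_N * 'I_N) := dft_angle N k.1 k.2 n.1 n.2 : R.
transitivity (\sum_k \sum_n \sum_n' (cos (- cs k n) * cos (- cs k n') +
    sin (- cs k n) * sin (- cs k n')) * cov P (p n) (p n')).
  apply: eq_bigr => k _; rewrite !var_lin // -big_split; apply: eq_bigr => n _.
  by rewrite -big_split; apply: eq_bigr => n' _ /=; ring.
rewrite exchange_big /=; under eq_bigr do rewrite exchange_big /=.
rewrite mulr_sumr; apply: eq_bigr => n _.
transitivity (\sum_n' cov P (p n) (p n') * (if n == n' then (N ^ 2)%:R else 0)).
  apply: eq_bigr => n' _; rewrite -mulr_suml mulrC; congr (_ * _).
  transitivity (\sum_(k : 'I_N * 'I_N) cos (cs k n - cs k n')).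
    by apply: eq_bigr => k _; rewrite -cosB -cosN; congr cos; ring.
  rewrite -(pair_bigA _ (fun k1 k2 => cos (cs (k1, k2) n - cs (k1, k2) n'))).
  by rewrite dft_orthogonality //; case: n n' => [n1 n2] [n1' n2'].
rewrite (bigD1 n) //= eqxx big1 ?addr0 => [|n' /negbTE]; last first.
  by rewrite eq_sym => ->; rewrite mulr0.
by rewrite -var_cov // mulrC.
Qed.

End dft_variance.

Lemma sumr_pair (V : nmodType) (I J : finType) (F : I * J -> V) :
  \sum_(p : I * J) F p = \sum_i \sum_j F (i, j).
Proof. by rewrite pair_bigA; apply: eq_bigr => -[]. Qed.

Lemma sumr_ord_lt (R : pzSemiRingType) (N M : nat) (x : R) : (M <= N)%N ->
  \sum_(i < N) (if (i < M)%N then x else 0) = M%:R * x.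
Proof.
move=> MN; rewrite -big_mkcond -(big_ord_widen _ (fun=> x) MN).
by rewrite sumr_const card_ord mulr_natl.
Qed.

Lemma sumr_block (R : pzSemiRingType) (N M : nat) (x : R) : (M <= N)%N ->
  \sum_(n : 'I_N * 'I_N) (if (n.1 < M)%N && (n.2 < M)%N then x else 0) =
  (M ^ 2)%:R * x.
Proof.
move=> MN; rewrite sumr_pair (eq_bigr (fun i : 'I_N =>
  if (i < M)%N then \sum_(j < N) (if (j < M)%N then x else 0) else 0)).
  by rewrite !sumr_ord_lt // mulrA -natrM mulnn.
by move=> i _; case: (i < M)%N => //; rewrite big1.
Qed.

Section complex_parts.
Context {R : realType}.

Lemma Re_sum (I : Type) (s : seq I) (F : I -> R[i]) :
  complex.Re (\sum_(i <- s) F i) = \sum_(i <- s) complex.Re (F i).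
Proof. exact: (@raddf_sum _ _ (@complex.Re R : Rcomplex R -> R)). Qed.

Lemma Im_sum (I : Type) (s : seq I) (F : I -> R[i]) :
  complex.Im (\sum_(i <- s) F i) = \sum_(i <- s) complex.Im (F i).
Proof. exact: (@raddf_sum _ _ (@complex.Im R : Rcomplex R -> R)). Qed.

Lemma Re_mul_expi (z : R[i]) t :
  complex.Re (z * expi t) = complex.Re z * cos t - complex.Im z * sin t.
Proof. by case: z. Qed.

Lemma Im_mul_expi (z : R[i]) t :
  complex.Im (z * expi t) = complex.Re z * sin t + complex.Im z * cos t.
Proof. by case: z => a b /=; ring. Qed.

Lemma Re_realM (c : R) (z : R[i]) : complex.Re (c%:C%C * z) = c * complex.Re z.
Proof. by case: z => a b /=; ring. Qed.

End complex_parts.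

Section quantized_spectrum.
Context {d} {T : measurableType d} {R : realType} (P : probability T R).
Variables (N : nat) (gt : 'M[R[i]]_N) (WR WI dR dI : 'I_N -> 'I_N -> T -> R).
Hypothesis noise_measurable :
  forall t, measurable_fun setT (noise_family WR WI dR dI t).
Hypothesis noise_indep : mutually_independent P (noise_family WR WI dR dI).

Let X w := Xtilde gt WR WI dR dI w.

(* [noise_index b c k] is the index in [noise_family] of the signal noise
   ([c = false]) or of the dither ([c = true]) entering the real ([b = false])
   or imaginary ([b = true]) part of the entry [k] of [X]. *)
Definition noise_index (b c : bool) (k : 'I_N * 'I_N) : 'I_4 * 'I_N * 'I_N :=
  (if c then if b then @Ordinal 4 3 isT else @Ordinal 4 2 isT
   else if b then @Ordinal 4 1 isT else @Ordinal 4 0 isT, k.1, k.2).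

Lemma noise_index_inj b c k b' c' k' :
  noise_index b c k = noise_index b' c' k' -> [/\ b = b', c = c' & k = k'].
Proof.
case: k k' => [k1 k2] [k1' k2'].
by case: b c b' c' => [] [] [] [] //= [-> ->].
Qed.

Definition xpart (j : bool * ('I_N * 'I_N)) (w : T) : R :=
  (if j.1 then @complex.Im R else @complex.Re R) (X w j.2.1 j.2.2).

Lemma xpart_sgnbit b k w : xpart (b, k) w =
  sgnbit ((if b then @complex.Im R else @complex.Re R) (gt k.1 k.2) +
    noise_family WR WI dR dI (noise_index b false k) w +
    noise_family WR WI dR dI (noise_index b true k) w).
Proof. by case: b; rewrite /xpart /X mxE. Qed.

Lemma bounded_rv_xpart j : bounded_rv (xpart j).
Proof.
case: j => b k; rewrite -[xpart _]/(fun w => xpart (b, k) w).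
by under eq_fun do rewrite xpart_sgnbit; exact: bounded_rv_sgnbit.
Qed.

Lemma var_xpart_le j : var P (xpart j) <= 4^-1.
Proof.
apply: le_trans (var_le_mean_sqrB 0 (bounded_rv_xpart j)) _.
under eq_fun do rewrite subr0 /xpart /X mxE.
rewrite (_ : (fun w => _) = fun=> 4^-1) ?mean_cst //; apply/funext => w.
by case: j.1 => /=; rewrite /sgnbit; case: ifP => _; field.
Qed.

Lemma cov_xpart j j' : j != j' -> cov P (xpart j) (xpart j') = 0.
Proof.
case: j j' => [b k] [b' k'] jj'.
rewrite -[xpart (b, k)]/(fun w => xpart (b, k) w).
rewrite -[xpart (b', k')]/(fun w => xpart (b', k') w).
under eq_fun do rewrite xpart_sgnbit.
under [G in cov _ _ G]eq_fun do rewrite xpart_sgnbit.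
apply: cov_sgnbit_independent => //.
apply: mutually_independent_pairs => //;
  apply/eqP => /noise_index_inj[eb _ ek] //.
all: by rewrite eb ek eqxx in jj'.
Qed.

Definition idft_coef (n : 'I_N * 'I_N) (j : bool * ('I_N * 'I_N)) : R :=
  (N ^ 2)%:R^-1 * (if j.1 then - sin (dft_angle N j.2.1 j.2.2 n.1 n.2)
                   else cos (dft_angle N j.2.1 j.2.2 n.1 n.2)).

Lemma Re_idft2_Xtilde n w :
  complex.Re (idft2 (X w) n.1 n.2) = \sum_j idft_coef n j * xpart j w.
Proof.
rewrite mxE Re_realM Re_sum mulr_sumr sumr_pair big_bool /= -big_split sumr_pair.
apply: eq_bigr => k1 _.
rewrite Re_sum mulr_sumr; apply: eq_bigr => k2 _.
by rewrite Re_mul_expi /idft_coef /xpart /=; ring.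
Qed.

Lemma bounded_rv_Re_idft2_Xtilde n :
  bounded_rv (fun w => complex.Re (idft2 (X w) n.1 n.2)).
Proof.
under eq_fun do rewrite Re_idft2_Xtilde.
exact/bounded_rv_lin/bounded_rv_xpart.
Qed.

Lemma var_Re_idft2_Xtilde_le n : (0 < N)%N ->
  var P (fun w => complex.Re (idft2 (X w) n.1 n.2)) <= 4^-1 / (N ^ 2)%:R.
Proof.
move=> N0; under eq_fun do rewrite Re_idft2_Xtilde.
apply: le_trans (var_lin_uncorrelated_le _ _ _ _ bounded_rv_xpart cov_xpart
  var_xpart_le) _.
rewrite ler_wpM2l // sumr_pair big_bool /= -big_split /=.
rewrite (eq_bigr (fun=> (N ^ 2)%:R^-1 ^+ 2)) => [|k _]; last first.
  by rewrite /idft_coef /= !exprMn sqrrN -mulrDr addrC cos2Dsin2 mulr1.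
set c : R := (N ^ 2)%:R; have c0 : c != 0 by rewrite pnatr_eq0 expn_eq0 andbT -lt0n.
by rewrite sumr_const card_prod card_ord mulnn -mulr_natr -/c expr2 -mulrA mulVf ?mulr1.
Qed.

Variable M : nat.

Definition pixel (n : 'I_N * 'I_N) (w : T) : R :=
  clip (complex.Re (proj_blk M (idft2 (X w)) n.1 n.2)).

Lemma pixel_block (n : 'I_N * 'I_N) : (n.1 < M)%N && (n.2 < M)%N ->
  pixel n = fun w => clip (complex.Re (idft2 (X w) n.1 n.2)).
Proof. by move=> nM; apply/funext => w; rewrite /pixel mxE nM. Qed.

Lemma pixel_out (n : 'I_N * 'I_N) : ~~ ((n.1 < M)%N && (n.2 < M)%N) -> pixel n = fun=> 0.
Proof. by move=> nM; apply/funext => w; rewrite /pixel mxE (negbTE nM) clip0. Qed.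

Lemma bounded_rv_pixel n : bounded_rv (pixel n).
Proof.
have [nM|nM] := boolP ((n.1 < M)%N && (n.2 < M)%N).
  by rewrite pixel_block //; exact/bounded_rv_clip/bounded_rv_Re_idft2_Xtilde.
by rewrite pixel_out //; exact: bounded_rv_cst.
Qed.

Lemma var_pixel_le n : (0 < N)%N -> var P (pixel n) <=
  (if (n.1 < M)%N && (n.2 < M)%N then 4^-1 / (N ^ 2)%:R else 0).
Proof.
move=> N0; have [nM|nM] := boolP ((n.1 < M)%N && (n.2 < M)%N).
  rewrite pixel_block //; apply: le_trans (var_Re_idft2_Xtilde_le n N0).
  exact/var_clip_le/bounded_rv_Re_idft2_Xtilde.
by rewrite pixel_out // /var !mean_cst subrr expr0n.
Qed.

Lemma Re_Qop k1 k2 w : complex.Re (Qop M (X w) k1 k2) =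
  \sum_(n : 'I_N * 'I_N) cos (- dft_angle N k1 k2 n.1 n.2) * pixel n w.
Proof.
rewrite mxE Re_sum sumr_pair; apply: eq_bigr => n1 _.
rewrite Re_sum; apply: eq_bigr => n2 _.
by rewrite Re_mul_expi mxE /= mul0r subr0 mulrC.
Qed.

Lemma Im_Qop k1 k2 w : complex.Im (Qop M (X w) k1 k2) =
  \sum_(n : 'I_N * 'I_N) sin (- dft_angle N k1 k2 n.1 n.2) * pixel n w.
Proof.
rewrite mxE Im_sum sumr_pair; apply: eq_bigr => n1 _.
rewrite Im_sum; apply: eq_bigr => n2 _.
by rewrite Im_mul_expi mxE /= mul0r addr0 mulrC.
Qed.

Lemma cvariance_Qop k1 k2 : cvariance P (fun w => Qop M (X w) k1 k2) =
  (var P (fun w => \sum_(n : 'I_N * 'I_N)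
                     cos (- dft_angle N k1 k2 n.1 n.2) * pixel n w) +
   var P (fun w => \sum_(n : 'I_N * 'I_N)
                     sin (- dft_angle N k1 k2 n.1 n.2) * pixel n w))%:E.
Proof.
rewrite /cvariance; under eq_fun do rewrite Re_Qop.
under [G in (_ + 'V_P[G])%E]eq_fun do rewrite Im_Qop.
by rewrite !variance_var ?EFinD //; exact/bounded_rv_lin/bounded_rv_pixel.
Qed.

Lemma mean_cvariance_Qop_le : (0 < N)%N -> (M <= N)%N ->
  ((N ^ 2)%:R^-1%:E * \sum_(k1 < N) \sum_(k2 < N)
     cvariance P (fun w => Qop M (X w) k1 k2) <=
   (4^-1 * ((M ^ 2)%:R / (N ^ 2)%:R))%:E)%E.
Proof.
move=> N0 MN; have N2 : (N ^ 2)%:R != 0 :> R.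
  by rewrite pnatr_eq0 expn_eq0 andbT -lt0n.
under eq_bigr do under eq_bigr do rewrite cvariance_Qop.
rewrite pair_bigA sumEFin -EFinM lee_fin dft_var_parseval; last first.
  exact: bounded_rv_pixel.
rewrite mulKf //.
apply: le_trans (ler_sum _ (fun n _ => var_pixel_le n N0)) _.
by rewrite sumr_block // mulrCA lexx.
Qed.

End quantized_spectrum.

Theorem lemma6 (R : realType) (mu : probability R R)
  (mu_sym : symmetric_law mu)
  (mu_int : mu.-integrable setT (fun x : R => x%:E))
  (mu_mean0 : (\int[mu]_x x%:E = 0)%E)
  (sigma : R) (sigma_gt0 : 0 < sigma) :
  exists C : R, forall (M N : nat), (0 < M)%N -> (2 * M < N)%N ->
  forall g : 'M[R]_N,
    (forall i j : 'I_N, 0 <= g i j <= 255) ->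
    (forall i j : 'I_N, ~~ ((i < M) && (j < M))%N -> g i j = 0) ->
  forall (d : measure_display) (T : measurableType d) (P : probability T R)
         (WR WI dR dI : 'I_N -> 'I_N -> T -> R),
    (forall t, measurable_fun setT (noise_family WR WI dR dI t)) ->
    mutually_independent P (noise_family WR WI dR dI) ->
    (forall i j A, measurable A -> P (WR i j @^-1` A) = mu A) ->
    (forall i j A, measurable A -> P (WI i j @^-1` A) = mu A) ->
    (forall i j A, measurable A -> P (dR i j @^-1` A) = normal_prob 0 sigma A) ->
    (forall i j A, measurable A -> P (dI i j @^-1` A) = normal_prob 0 sigma A) ->
    ((((N ^ 2)%:R)^-1)%:E *
       (\sum_(k1 < N) \sum_(k2 < N)
          (cvariance P (fun w => Qop M (Xtilde (img_dft g) WR WI dR dI w) k1 k2)))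
     <= (C * ((M ^ 2)%:R / (N ^ 2)%:R))%:E)%E.
Proof.
exists 4^-1 => M N _ MN g _ _ d T P WR WI dR dI mW W_indep _ _ _ _.
by apply: mean_cvariance_Qop_le => //; lia.
Qed.
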